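(* Let $(\mathfrak C:A)$, $(\mathfrak D:B)$ be corings. Let $(\Sigma,\mathfrak s)$ and $(\widetilde\Sigma,\widetilde{\mathfrak s})$ be pairs, each consisting of a $(B,A)$-bimodule and a $(B,A)$-bilinear map $\mathfrak D\otimes_B\Sigma\to\Sigma\otimes_A\mathfrak C$ (resp. $\mathfrak D\otimes_B\widetilde\Sigma\to\widetilde\Sigma\otimes_A\mathfrak C$) satisfying $(\Sigma\otimes_A\varepsilon_{\mathfrak C})\circ\mathfrak s=\varepsilon_{\mathfrak D}\otimes_B\Sigma$ and $(\Sigma\otimes_A\Delta_{\mathfrak C})\circ\mathfrak s=(\mathfrak s\otimes_A\mathfrak C)\circ(\mathfrak D\otimes_B\mathfrak s)\circ(\Delta_{\mathfrak D}\otimes_B\Sigma)$ (and likewise for $\widetilde{\mathfrak s}$). Call a $2$-cell from $(\Sigma,\mathfrak s)$ to $(\widetilde\Sigma,\widetilde{\mathfrak s})$ a $(B,A)$-bilinear map $\mathfrak a:\mathfrak D\otimes_B\Sigma\to\widetilde\Sigma$ such that $(\mathfrak a\otimes_A\mathfrak C)\circ(\mathfrak D\otimes_B\mathfrak s)\circ(\Delta_{\mathfrak D}\otimes_B\Sigma)=\widetilde{\mathfrak s}\circ(\mathfrak D\otimes_B\mathfrak a)\circ(\Delta_{\mathfrak D}\otimes_B\Sigma)$. Regard $\mathfrak D\otimes_B\Sigma$ as a $(\mathfrak D,\mathfrak C)$-bicomodule with left coaction $\Delta_{\mathfrak D}\otimes_B\Sigma$ and right coaction $(\mathfrak D\otimes_B\mathfrak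 s)\circ(\Delta_{\mathfrak D}\otimes_B\Sigma)$, and similarly $\mathfrak D\otimes_B\widetilde\Sigma$. Then $\mathfrak a\mapsto(\mathfrak D\otimes_B\mathfrak a)\circ(\Delta_{\mathfrak D}\otimes_B\Sigma)$ is a bijection from the set of $2$-cells $(\Sigma,\mathfrak s)\to(\widetilde\Sigma,\widetilde{\mathfrak s})$ onto the set $\mathrm{Hom}^{\mathfrak D,\mathfrak C}(\mathfrak D\otimes_B\Sigma,\mathfrak D\otimes_B\widetilde\Sigma)$ of $(\mathfrak D,\mathfrak C)$-bicolinear maps, with inverse $f\mapsto(\varepsilon_{\mathfrak D}\otimes_B\widetilde\Sigma)\circ f$.
   Context: $k$ is a commutative ring; all algebras are unital associative $k$-algebras. An $A$-coring $(\mathfrak C:A)$ is an $A$-bimodule $\mathfrak C$ with coassociative comultiplication $\Delta_{\mathfrak C}:\mathfrak C\to\mathfrak C\otimes_A\mathfrak C$ and counit $\varepsilon_{\mathfrak C}:\mathfrak C\to A$, both $A$-bimodule maps. A $(\mathfrak D,\mathfrak C)$-bicomodule is a $(B,A)$-bimodule with a left $\mathfrak D$-comodule and right $\mathfrak C$-comodule structure whose coactions commute; bicolinear maps are maps colinear for both coactions. Identifications $B\otimes_B\Sigma\cong\Sigma\cong\Sigma\otimes_AA$ are used tacitly. *)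

From HB Require Import structures.
From mathcomp Require Import all_boot all_order all_algebra.
Set Implicit Arguments. Unset Strict Implicit. Unset Printing Implicit Defensive.
Import GRing.Theory.
Local Open Scope ring_scope.

Record bimod (k : comNzRingType) (R S : algType k) := Bimod {
  bm_sort :> zmodType;
  lact : R -> bm_sort -> bm_sort;
  ract : bm_sort -> S -> bm_sort;
  lactDl : forall r r' x, lact (r + r') x = lact r x + lact r' x;
  lactDr : forall r x y, lact r (x + y) = lact r x + lact r y;
  lact1 : forall x, lact 1 x = x;
  lactM : forall r r' x, lact (r * r') x = lact r (lact r' x);
  ractDl : forall x y s, ract (x + y) s = ract x s + ract y s;
  ractDr : forall x s s', ract x (s + s') = ract x s + ract x s';
  ract1 : forall x, ract x 1 = x;
  ractM : forall x s s', ract x (s * s') = ract (ract x s) s';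
  lractA : forall r x s, lact r (ract x s) = ract (lact r x) s;
  kcentral : forall (c : k) x, lact (c%:A) x = ract x (c%:A) }.
Arguments lact {k R S b}.
Arguments ract {k R S b}.

Definition additive_map (U V : zmodType) (f : U -> V) :=
  forall x y, f (x + y) = f x + f y.

Definition bimap (k : comNzRingType) (R S : algType k) (M N : bimod R S) (f : M -> N) :=
  [/\ additive_map f,
      forall r x, f (lact r x) = lact r (f x) &
      forall x s, f (ract x s) = ract (f x) s].

Section Reg.
Variables (k : comNzRingType) (A : algType k).
Definition reg : bimod A A.
Proof.
refine (@Bimod k A A A (fun r x => r * x) (fun x s => x * s) _ _ _ _ _ _ _ _ _ _).
- by move=> *; rewrite mulrDl.
- by move=> *; rewrite mulrDr.
- by move=> *; rewrite mul1r.
- by move=> *; rewrite mulrA.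
- by move=> *; rewrite mulrDl.
- by move=> *; rewrite mulrDr.
- by move=> *; rewrite mulr1.
- by move=> *; rewrite mulrA.
- by move=> *; rewrite mulrA.
- by move=> c x; rewrite mulr_algl mulr_algr.
Defined.
End Reg.

Definition balanced (k : comNzRingType) (R S T : algType k) (M : bimod R S) (N : bimod S T)
  (X : zmodType) (phi : M -> N -> X) :=
  [/\ forall m m' n, phi (m + m') n = phi m n + phi m' n,
      forall m n n', phi m (n + n') = phi m n + phi m n' &
      forall m s n, phi (ract m s) n = phi m (lact s n)].

(* A tensor product M (x)_S N, given by its universal property
   (as an abelian group), together with its (R,T)-bimodule structure. *)
Record tensor (k : comNzRingType) (R S T : algType k) (M : bimod R S) (N : bimod S T) := Tensor {
  tobj : bimod R T;
  tmul : M -> N -> tobj;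
  tmul_balanced : balanced tmul;
  tmul_lact : forall r m n, lact r (tmul m n) = tmul (lact r m) n;
  tmul_ract : forall m n t, ract (tmul m n) t = tmul m (ract n t);
  tlift : forall X : zmodType, (M -> N -> X) -> tobj -> X;
  tlift_additive : forall (X : zmodType) (phi : M -> N -> X), balanced phi -> additive_map (tlift phi);
  tlift_tmul : forall (X : zmodType) (phi : M -> N -> X), balanced phi ->
     forall m n, tlift phi (tmul m n) = phi m n;
  tlift_uniq : forall (X : zmodType) (phi : M -> N -> X) (g : tobj -> X), balanced phi ->
     additive_map g -> (forall m n, g (tmul m n) = phi m n) -> g =1 tlift phi }.

Definition tensor_system (k : comNzRingType) :=
  forall (R S T : algType k) (M : bimod R S) (N : bimod S T), tensor M N.

Section TensorOps.
Variables (k : comNzRingType) (ts : tensor_system k).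

Definition tns (R S T : algType k) (M : bimod R S) (N : bimod S T) : bimod R T :=
  tobj (ts M N).
Definition tm (R S T : algType k) (M : bimod R S) (N : bimod S T) (m : M) (n : N)
  : tns M N := tmul (ts M N) m n.
Definition tlft (R S T : algType k) (M : bimod R S) (N : bimod S T) (X : zmodType)
  (phi : M -> N -> X) : tns M N -> X := @tlift _ _ _ _ _ _ (ts M N) X phi.

Definition tmap (R S T : algType k) (M M' : bimod R S) (N N' : bimod S T)
  (f : M -> M') (g : N -> N') : tns M N -> tns M' N' :=
  @tlft R S T M N (tns M' N') (fun m n => tm (f m) (g n)).

Definition assoc (R S T U : algType k) (M : bimod R S) (N : bimod S T) (P : bimod T U)
  : tns (tns M N) P -> tns M (tns N P) :=
  @tlft _ _ _ (tns M N) P (tns M (tns N P))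
    (fun x p => @tlft _ _ _ M N (tns M (tns N P)) (fun m n => tm m (tm n p)) x).
Definition assocV (R S T U : algType k) (M : bimod R S) (N : bimod S T) (P : bimod T U)
  : tns M (tns N P) -> tns (tns M N) P :=
  @tlft _ _ _ M (tns N P) (tns (tns M N) P)
    (fun m y => @tlft _ _ _ N P (tns (tns M N) P) (fun n p => tm (tm m n) p) y).

Definition lu (R S : algType k) (M : bimod R S) : tns (reg R) M -> M :=
  @tlft _ _ _ (reg R) M M (fun r m => lact r m).
Definition ru (R S : algType k) (M : bimod R S) : tns M (reg S) -> M :=
  @tlft _ _ _ M (reg S) M (fun m s => ract m s).

Definition is_coring (A : algType k) (C : bimod A A)
  (Delta : C -> tns C C) (eps : C -> reg A) :=
  [/\ bimap Delta, bimap eps,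
      forall x, assoc (tmap Delta id (Delta x)) = tmap id Delta (Delta x),
      forall x, lu (tmap eps id (Delta x)) = x &
      forall x, ru (tmap id eps (Delta x)) = x].

Section Pairs.
Variables (A B : algType k) (C : bimod A A) (DeltaC : C -> tns C C) (epsC : C -> reg A)
  (D : bimod B B) (DeltaD : D -> tns D D) (epsD : D -> reg B).

Definition deltaL (Sig : bimod B A) (x : tns D Sig) : tns D (tns D Sig) :=
  assoc (tmap DeltaD id x).

Definition is_pair (Sig : bimod B A) (s : tns D Sig -> tns Sig C) :=
  [/\ bimap s,
      forall x, ru (tmap id epsC (s x)) = lu (tmap epsD id x) &
      forall x, tmap id DeltaC (s x) =
                assoc (tmap s id (assocV (tmap id s (deltaL x))))].

Definition rhoR (Sig : bimod B A) (s : tns D Sig -> tns Sig C) (x : tns D Sig)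
  : tns (tns D Sig) C := assocV (tmap id s (deltaL x)).

Definition two_cell (Sig Sig' : bimod B A) (s : tns D Sig -> tns Sig C)
  (s' : tns D Sig' -> tns Sig' C) (a : tns D Sig -> Sig') :=
  bimap a /\
  forall x, tmap a id (assocV (tmap id s (deltaL x))) = s' (tmap id a (deltaL x)).

Definition bicolinear (Sig Sig' : bimod B A) (s : tns D Sig -> tns Sig C)
  (s' : tns D Sig' -> tns Sig' C) (f : tns D Sig -> tns D Sig') :=
  [/\ bimap f,
      forall x, tmap id f (deltaL x) = deltaL (f x) &
      forall x, tmap f id (rhoR s x) = rhoR s' (f x)].

Definition cell_to_map (Sig Sig' : bimod B A) (a : tns D Sig -> Sig')
  : tns D Sig -> tns D Sig' := fun x => tmap id a (deltaL x).

Definition map_to_cell (Sig Sig' : bimod B A) (f : tns D Sig -> tns D Sig')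
  : tns D Sig -> Sig' := fun x => lu (tmap epsD id (f x)).
End Pairs.
End TensorOps.

(* The two assignments are mutually inverse by the counit laws of D: applying
   eps_D after the left coaction lambda = Delta_D (x) Sigma gives back the
   identity on either side.  That (D (x) a) o lambda is left colinear is the
   coassociativity of lambda together with its naturality in Sigma; it is
   right colinear because the two coactions on D (x) Sigma commute, after
   which the 2-cell identity is exactly what is needed.  Conversely
   eps_D o f is a 2-cell because eps_D applied to the right coaction
   rho = (D (x) s) o lambda gives back s. *)
From Pilot Require Import Defs.
From HB Require Import structures.
From mathcomp Require Import all_boot all_order all_algebra.
Set Implicit Arguments. Unset Strict Implicit. Unset Printing Implicit Defensive.
Import GRing.Theory.
Local Open Scope ring_scope.

Section Tensors.
Variables (k : comNzRingType) (ts : tensor_system k).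
Local Notation tm := (tm ts).
Local Notation tlft := (@tlft k ts _ _ _ _ _ _).
Local Notation tmap := (@tmap k ts _ _ _ _ _ _ _).
Local Notation assoc := (@assoc k ts _ _ _ _ _ _ _).
Local Notation assocV := (@assocV k ts _ _ _ _ _ _ _).
Local Notation lu := (@lu k ts _ _ _).
Local Notation ru := (@ru k ts _ _ _).

Definition lmap (R S S' : algType k) (M : bimod R S) (N : bimod R S') (f : M -> N) :=
  additive_map f /\ forall r x, f (lact r x) = lact r (f x).
Definition rmap (R R' S : algType k) (M : bimod R S) (N : bimod R' S) (f : M -> N) :=
  additive_map f /\ forall x s, f (ract x s) = ract (f x) s.

Section LinearMaps.
Variables (R S : algType k) (M N : bimod R S) (f : M -> N).

Lemma bimap_lmap : bimap f -> lmap f. Proof. by case. Qed.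
Lemma bimap_rmap : bimap f -> rmap f. Proof. by case. Qed.
Lemma lmap_rmap_bimap : lmap f -> rmap f -> bimap f.
Proof. by move=> [? ?] [? ?]; split. Qed.

Lemma bimap_id : bimap (@id M). Proof. by []. Qed.

Lemma lact_additive r : additive_map (@lact _ _ _ M r).
Proof. by move=> x y; rewrite lactDr. Qed.
Lemma ract_additive s : additive_map (fun x : M => ract x s).
Proof. by move=> x y; rewrite ractDl. Qed.
End LinearMaps.

Lemma lmap_additive (R S S' : algType k) (M : bimod R S) (N : bimod R S') (f : M -> N) :
  lmap f -> additive_map f.
Proof. by case. Qed.

Lemma additive_id (M : zmodType) : additive_map (fun x : M => x).
Proof. by []. Qed.
Lemma additive_comp (M N P : zmodType) (f : N -> P) (g : M -> N) :
  additive_map f -> additive_map g -> additive_map (fun x => f (g x)).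
Proof. by move=> hf hg x y; rewrite hg hf. Qed.
Lemma additiveD (M N : zmodType) (f g : M -> N) :
  additive_map f -> additive_map g -> additive_map (fun x => f x + g x).
Proof. by move=> hf hg x y; rewrite hf hg addrACA. Qed.

Lemma lmap_comp (R S1 S2 S3 : algType k) (M : bimod R S1) (N : bimod R S2) (P : bimod R S3)
  (f : N -> P) (g : M -> N) : lmap f -> lmap g -> lmap (fun x => f (g x)).
Proof. by move=> [f1 f2] [g1 g2]; split=> [|r x]; [exact: additive_comp | rewrite g2 f2]. Qed.
Lemma rmap_comp (R1 R2 R3 S : algType k) (M : bimod R1 S) (N : bimod R2 S) (P : bimod R3 S)
  (f : N -> P) (g : M -> N) : rmap f -> rmap g -> rmap (fun x => f (g x)).
Proof. by move=> [f1 f2] [g1 g2]; split=> [|x s]; [exact: additive_comp | rewrite g2 f2]. Qed.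
Lemma bimap_comp (R S : algType k) (M N P : bimod R S) (f : N -> P) (g : M -> N) :
  bimap f -> bimap g -> bimap (fun x => f (g x)).
Proof.
move=> hf hg; apply: lmap_rmap_bimap.
- exact: lmap_comp (bimap_lmap hf) (bimap_lmap hg).
- exact: rmap_comp (bimap_rmap hf) (bimap_rmap hg).
Qed.

Section PureTensors.
Variables (R S T : algType k) (M : bimod R S) (N : bimod S T).

Lemma tmDl (m m' : M) (n : N) : tm (m + m') n = tm m n + tm m' n.
Proof. by have [h _ _] := tmul_balanced (ts M N); exact: h. Qed.
Lemma tmDr (m : M) (n n' : N) : tm m (n + n') = tm m n + tm m n'.
Proof. by have [_ h _] := tmul_balanced (ts M N); exact: h. Qed.
Lemma tm_balanced (m : M) s (n : N) : tm (ract m s) n = tm m (lact s n).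
Proof. by have [_ _ h] := tmul_balanced (ts M N); exact: h. Qed.
Lemma tm_lact r (m : M) (n : N) : lact r (tm m n) = tm (lact r m) n.
Proof. exact: tmul_lact. Qed.
Lemma tm_ract (m : M) (n : N) t : ract (tm m n) t = tm m (ract n t).
Proof. exact: tmul_ract. Qed.

Lemma tm_additivel (n : N) : additive_map (fun m : M => tm m n).
Proof. by move=> ? ?; rewrite tmDl. Qed.
Lemma tm_additiver (m : M) : additive_map (fun n : N => tm m n).
Proof. by move=> ? ?; rewrite tmDr. Qed.

Lemma tlft_tm (X : zmodType) (phi : M -> N -> X) m n :
  balanced phi -> tlft phi (tm m n) = phi m n.
Proof. by move=> b; exact: (tlift_tmul (ts M N) b). Qed.
Lemma tlft_additive (X : zmodType) (phi : M -> N -> X) :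
  balanced phi -> additive_map (tlft phi).
Proof. by move=> b; exact: (@tlift_additive _ _ _ _ _ _ (ts M N) X phi b). Qed.

Lemma tensor_ext (X : zmodType) (g1 g2 : tns ts M N -> X) :
  additive_map g1 -> additive_map g2 ->
  (forall m n, g1 (tm m n) = g2 (tm m n)) -> forall x, g1 x = g2 x.
Proof.
move=> a1 a2 e x.
have b : balanced (fun m n => g1 (tm m n)).
  by split=> *; rewrite ?tmDl ?tmDr ?a1 // tm_balanced.
rewrite (tlift_uniq b a1 (fun _ _ => erefl)).
by rewrite (tlift_uniq b a2 (fun m n => esym (e m n))).
Qed.
End PureTensors.

Section TripleTensors.
Variables (R S T U : algType k) (M : bimod R S) (N : bimod S T) (P : bimod T U).

Lemma tensor_ext3l (X : zmodType) (g1 g2 : tns ts (tns ts M N) P -> X) :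
  additive_map g1 -> additive_map g2 ->
  (forall m n p, g1 (tm (tm m n) p) = g2 (tm (tm m n) p)) -> forall x, g1 x = g2 x.
Proof.
move=> a1 a2 e; apply: tensor_ext => // y p; move: y.
apply: (tensor_ext (g1 := fun y => g1 (tm y p)) (g2 := fun y => g2 (tm y p))) => //.
- by move=> ? ?; rewrite tmDl a1.
- by move=> ? ?; rewrite tmDl a2.
Qed.

Lemma tensor_ext3r (X : zmodType) (g1 g2 : tns ts M (tns ts N P) -> X) :
  additive_map g1 -> additive_map g2 ->
  (forall m n p, g1 (tm m (tm n p)) = g2 (tm m (tm n p))) -> forall x, g1 x = g2 x.
Proof.
move=> a1 a2 e; apply: tensor_ext => // m y; move: y.
apply: (tensor_ext (g1 := fun y => g1 (tm m y)) (g2 := fun y => g2 (tm m y))) => //.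
- by move=> ? ?; rewrite tmDr a1.
- by move=> ? ?; rewrite tmDr a2.
Qed.
End TripleTensors.

Create HintDb linear.
(* As plain [Resolve] hints the composition lemmas unify with every map, and
   failing searches explode; so they only fire on syntactic composites. *)
Hint Resolve bimap_lmap bimap_rmap lmap_additive bimap_id lact_additive tlft_additive : linear.
Hint Extern 5 (lmap ?c) =>
  lazymatch c with fun x => ?f (@?g x) => apply: (lmap_comp (f := f) (g := g)) end : linear.
Hint Extern 5 (rmap ?c) =>
  lazymatch c with fun x => ?f (@?g x) => apply: (rmap_comp (f := f) (g := g)) end : linear.
Hint Extern 5 (bimap ?c) =>
  lazymatch c with fun x => ?f (@?g x) => apply: (bimap_comp (f := f) (g := g)) end : linear.
Hint Extern 0 (additive_map _) => exact: additive_id : linear.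

Ltac solve_linear := solve [eauto 12 with linear].

Ltac solve_additive :=
  lazymatch goal with
  | |- additive_map (fun x => @?F x + @?G x) =>
      apply: (additiveD (f := F) (g := G)); solve_additive
  | |- additive_map (fun x => Defs.tm _ _ x) => apply: tm_additiver
  | |- additive_map (fun x => Defs.tm ?t (@?G x) ?n) =>
      apply: (additive_comp (f := fun y => Defs.tm t y n) (g := G));
      [apply: tm_additivel | solve_additive]
  | |- additive_map (fun x => ract (@?G x) ?s) =>
      apply: (additive_comp (f := fun y => ract y s) (g := G));
      [apply: ract_additive | solve_additive]
  | |- additive_map (fun x => ?F (@?G x)) =>
      apply: (additive_comp (f := F) (g := G)); [solve_linear | solve_additive]
  | |- _ => solve_linear
  end.

Ltac on_pure_tensors :=
  match goal with |- forall x, @?L x = @?R x =>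
    apply: (tensor_ext (g1 := L) (g2 := R)); [solve_additive | solve_additive | cbv beta]
  end.

Ltac on_pure_tensors3 :=
  match goal with |- forall x, @?L x = @?R x =>
    first [apply: (tensor_ext3l (g1 := L) (g2 := R)) | apply: (tensor_ext3r (g1 := L) (g2 := R))];
    [solve_additive | solve_additive | cbv beta]
  end.

Section TensorMaps.
Variables (R S T : algType k) (M M' : bimod R S) (N N' : bimod S T).
Variables (f : M -> M') (g : N -> N').
Hypotheses (hf : rmap f) (hg : lmap g).

Lemma tmap_balanced : balanced (fun m n => tm (f m) (g n)).
Proof.
case: hf hg => [fD fr] [gD gl]; split=> *; first by rewrite fD tmDl.
  by rewrite gD tmDr.
by rewrite fr gl tm_balanced.
Qed.

Lemma tmap_tm m n : tmap f g (tm m n) = tm (f m) (g n).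
Proof. by rewrite /Defs.tmap tlft_tm //; exact: tmap_balanced. Qed.

Lemma tmap_additive : additive_map (tmap f g).
Proof. by apply: tlft_additive; exact: tmap_balanced. Qed.
Hint Resolve tmap_additive : linear.

Lemma tmap_lmap : lmap f -> lmap (tmap f g).
Proof.
move=> [_ fl]; split; first exact: tmap_additive.
by move=> r; on_pure_tensors => m n; rewrite tm_lact !tmap_tm // tm_lact fl.
Qed.

Lemma tmap_rmap : rmap g -> rmap (tmap f g).
Proof.
move=> [_ gr]; split; first exact: tmap_additive.
by move=> x t; move: x; on_pure_tensors => m n; rewrite tm_ract !tmap_tm // tm_ract gr.
Qed.
End TensorMaps.

Lemma tmap_bimap (R S T : algType k) (M M' : bimod R S) (N N' : bimod S T)
  (f : M -> M') (g : N -> N') : bimap f -> bimap g -> bimap (tmap f g).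
Proof.
by move=> hf hg; apply: lmap_rmap_bimap; [apply: tmap_lmap | apply: tmap_rmap]; solve_linear.
Qed.
Hint Resolve tmap_additive tmap_lmap tmap_rmap tmap_bimap : linear.

Section TensorRight.
Variables (R S T T' : algType k) (M : bimod R S) (N : bimod S T) (N' : bimod S T').
Variable g : N -> N'.
Hypothesis hg : lmap g.

(* Unlike [tmap id g], this lets [g] change the right algebra. *)
Definition tmapr : tns ts M N -> tns ts M N' := tlft (fun (m : M) (n : N) => tm m (g n)).

Lemma tmapr_balanced : balanced (fun (m : M) (n : N) => tm m (g n)).
Proof.
case: hg => [gD gl]; split=> *; first by rewrite tmDl.
  by rewrite gD tmDr.
by rewrite gl tm_balanced.
Qed.

Lemma tmapr_tm m n : tmapr (tm m n) = tm m (g n).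
Proof. by rewrite /tmapr tlft_tm //; exact: tmapr_balanced. Qed.

Lemma tmapr_additive : additive_map tmapr.
Proof. by apply: tlft_additive; exact: tmapr_balanced. Qed.
End TensorRight.
Hint Resolve tmapr_additive : linear.

Section Associativity.
Variables (R S T U : algType k) (M : bimod R S) (N : bimod S T) (P : bimod T U).

Lemma assoc_inner_balanced (p : P) : balanced (fun (m : M) (n : N) => tm m (tm n p)).
Proof.
split=> *; first by rewrite tmDl.
  by rewrite tmDl tmDr.
by rewrite tm_balanced tm_lact.
Qed.
Hint Resolve assoc_inner_balanced : linear.

Lemma assoc_outer_balanced :
  balanced (fun x (p : P) => tlft (fun (m : M) (n : N) => tm m (tm n p)) x).
Proof.
split.
- by move=> x x' p; exact: (tlft_additive (assoc_inner_balanced p)).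
- move=> x p p'; move: x; on_pure_tensors => m n.
  by rewrite !tlft_tm ?tmDr //; solve_linear.
- move=> x s p; move: x; on_pure_tensors => m n.
  by rewrite tm_ract !tlft_tm ?tm_balanced //; solve_linear.
Qed.

Lemma assoc_tm m n p : assoc (tm (tm m n) p) = tm m (tm n p) :> tns ts M (tns ts N P).
Proof.
by rewrite /Defs.assoc !tlft_tm //; [exact: assoc_inner_balanced | exact: assoc_outer_balanced].
Qed.

Lemma assoc_additive : additive_map (assoc : tns ts (tns ts M N) P -> _).
Proof. by apply: tlft_additive; exact: assoc_outer_balanced. Qed.

Lemma assocV_inner_balanced (m : M) : balanced (fun (n : N) (p : P) => tm (tm m n) p).
Proof.
split=> *; first by rewrite tmDr tmDl.
  by rewrite tmDr.
by rewrite -tm_ract tm_balanced.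
Qed.
Hint Resolve assocV_inner_balanced : linear.

Lemma assocV_outer_balanced :
  balanced (fun (m : M) y => tlft (fun (n : N) (p : P) => tm (tm m n) p) y).
Proof.
split.
- move=> m m' y; move: y; on_pure_tensors => n p.
  by rewrite !tlft_tm ?tmDl //; solve_linear.
- by move=> m y y'; exact: (tlft_additive (assocV_inner_balanced m)).
- move=> m s y; move: y; on_pure_tensors => n p.
  by rewrite tm_lact !tlft_tm ?tm_balanced //; solve_linear.
Qed.

Lemma assocV_tm m n p : assocV (tm m (tm n p)) = tm (tm m n) p :> tns ts (tns ts M N) P.
Proof.
by rewrite /Defs.assocV !tlft_tm //; [exact: assocV_inner_balanced | exact: assocV_outer_balanced].
Qed.

Lemma assocV_additive : additive_map (assocV : tns ts M (tns ts N P) -> _).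
Proof. by apply: tlft_additive; exact: assocV_outer_balanced. Qed.
Hint Resolve assoc_additive assocV_additive : linear.

Lemma assoc_bimap : bimap (assoc : tns ts (tns ts M N) P -> _).
Proof.
split; first exact: assoc_additive.
- by move=> r; on_pure_tensors3 => m n p; rewrite !tm_lact !assoc_tm tm_lact.
- by move=> x t; move: x; on_pure_tensors3 => m n p; rewrite !tm_ract !assoc_tm !tm_ract.
Qed.

Lemma assocV_bimap : bimap (assocV : tns ts M (tns ts N P) -> _).
Proof.
split; first exact: assocV_additive.
- by move=> r; on_pure_tensors3 => m n p; rewrite !tm_lact !assocV_tm !tm_lact.
- by move=> x t; move: x; on_pure_tensors3 => m n p; rewrite !tm_ract !assocV_tm !tm_ract.
Qed.
Hint Resolve assocV_bimap : linear.

Definition assoc_tmr (p : P) (v : tns ts M N) : tns ts M (tns ts N P) := assoc (tm v p).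

Lemma assoc_tmr_lmap (p : P) : lmap (assoc_tmr p).
Proof.
split=> [v w|r v]; first by rewrite /assoc_tmr tmDl assoc_additive.
by rewrite /assoc_tmr -tm_lact; case: assoc_bimap => _ -> _.
Qed.
End Associativity.
Hint Resolve assoc_additive assocV_additive assocV_bimap assoc_tmr_lmap : linear.

Section Units.
Variables (R S : algType k) (M : bimod R S).

Lemma lu_balanced : balanced (fun (r : reg R) (m : M) => lact r m).
Proof. by split=> *; rewrite ?lactDl ?lactDr //= lactM. Qed.
Lemma ru_balanced : balanced (fun (m : M) (s : reg S) => ract m s).
Proof. by split=> *; rewrite ?ractDl ?ractDr //= ractM. Qed.

Lemma lu_tm r (m : M) : lu (tm r m) = lact r m.
Proof. by rewrite /Defs.lu tlft_tm //; exact: lu_balanced. Qed.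
Lemma ru_tm (m : M) s : ru (tm m s) = ract m s.
Proof. by rewrite /Defs.ru tlft_tm //; exact: ru_balanced. Qed.

Lemma lu_bimap : bimap (lu : tns ts (reg R) M -> M).
Proof.
have luD : additive_map (lu : tns ts (reg R) M -> M) by apply: tlft_additive; exact: lu_balanced.
split=> //.
- by move=> r; on_pure_tensors => r' m; rewrite tm_lact !lu_tm /= lactM.
- by move=> x t; move: x; on_pure_tensors => r m; rewrite tm_ract !lu_tm lractA.
Qed.

Lemma ru_bimap : bimap (ru : tns ts M (reg S) -> M).
Proof.
have ruD : additive_map (ru : tns ts M (reg S) -> M) by apply: tlft_additive; exact: ru_balanced.
split=> //.
- by move=> r; on_pure_tensors => m s; rewrite tm_lact !ru_tm lractA.
- by move=> x t; move: x; on_pure_tensors => m s; rewrite tm_ract !ru_tm /= ractM.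
Qed.
End Units.
Hint Resolve lu_bimap ru_bimap : linear.

Ltac tensor_simp :=
  repeat (first [ rewrite tmap_tm | rewrite tmapr_tm | rewrite assoc_tm
                | rewrite assocV_tm | rewrite lu_tm | rewrite ru_tm ];
          try solve_linear; cbv beta).

Section Functoriality.
Variables (R S T : algType k) (M M' M'' : bimod R S) (N N' N'' : bimod S T).

Lemma tmap_compr (g : N' -> N'') (g' : N -> N') (x : tns ts M N) :
  lmap g -> lmap g' -> tmap id g (tmap id g' x) = tmap id (fun z => g (g' z)) x.
Proof. by move=> hg hg'; move: x; on_pure_tensors => m n; tensor_simp. Qed.

Lemma tmap_compl (f : M' -> M'') (f' : M -> M') (x : tns ts M N) :
  rmap f -> rmap f' -> tmap f id (tmap f' id x) = tmap (fun z => f (f' z)) id x.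
Proof. by move=> hf hf'; move: x; on_pure_tensors => m n; tensor_simp. Qed.

Lemma eq_tmapr (g g' : N -> N') (x : tns ts M N) :
  lmap g -> lmap g' -> g =1 g' -> tmap id g x = tmap id g' x.
Proof. by move=> hg hg' e; move: x; on_pure_tensors => m n; tensor_simp; rewrite e. Qed.
End Functoriality.

Lemma assocV_tmap (R S T U : algType k) (M M' : bimod R S) (N N' : bimod S T)
  (P P' : bimod T U) (f : M -> M') (g : N -> N') (h : P -> P') x :
  rmap f -> bimap g -> lmap h ->
  assocV (tmap f (tmap g h) x) = tmap (tmap f g) h (assocV x).
Proof. by move=> hf hg hh; move: x; on_pure_tensors3 => m n p; tensor_simp. Qed.

Section LeftCoaction.
Variables (A B : algType k) (D : bimod B B) (DeltaD : D -> tns ts D D) (epsD : D -> reg B).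
Hypotheses (DeltaD_bimap : bimap DeltaD) (epsD_bimap : bimap epsD).
Hypothesis DeltaD_coassoc :
  forall x, assoc (tmap DeltaD id (DeltaD x)) = tmap id DeltaD (DeltaD x).
Hypothesis DeltaD_counitl : forall x, lu (tmap epsD id (DeltaD x)) = x.
Hypothesis DeltaD_counitr : forall x, ru (tmap id epsD (DeltaD x)) = x.
Local Notation lam := (@deltaL k ts A B D DeltaD _).

Definition counitL {Sig : bimod B A} (x : tns ts D Sig) : Sig := lu (tmap epsD id x).

Lemma deltaL_bimap (Sig : bimod B A) : bimap (@deltaL k ts A B D DeltaD Sig).
Proof. exact: bimap_comp (assoc_bimap _ _ _) (tmap_bimap DeltaD_bimap (bimap_id _)). Qed.

Lemma counitL_bimap (Sig : bimod B A) : bimap (@counitL Sig).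
Proof. exact: bimap_comp (lu_bimap _) (tmap_bimap epsD_bimap (bimap_id _)). Qed.
Hint Resolve deltaL_bimap counitL_bimap : linear.

Lemma deltaL_tm (Sig : bimod B A) d (n : Sig) : lam (tm d n) = assoc_tmr n (DeltaD d).
Proof. by rewrite /deltaL tmap_tm //; solve_linear. Qed.

Lemma deltaL_tmap (Sig Sig' : bimod B A) (g : Sig -> Sig') x :
  lmap g -> lam (tmap id g x) = tmap id (tmap id g) (lam x).
Proof.
move=> hg; move: x; on_pure_tensors => d n.
rewrite tmap_tm; try solve_linear.
rewrite !deltaL_tm; move: (DeltaD d); on_pure_tensors => e f.
by rewrite /assoc_tmr; tensor_simp.
Qed.

(* On [d (x) n] both iterates of lambda are [tmapr (assoc_tmr n)] applied to
   an iterate of Delta_D at [d], so coassociativity of Delta_D transfers. *)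
Lemma deltaL_assoc_tmr (Sig : bimod B A) (n : Sig) (y : tns ts D D) :
  lam (assoc_tmr n y) = tmapr (assoc_tmr n) (assoc (tmap DeltaD id y)).
Proof.
move: y; on_pure_tensors => e f; rewrite /assoc_tmr; tensor_simp.
rewrite deltaL_tm; move: (DeltaD e); on_pure_tensors => u v.
by rewrite /assoc_tmr; tensor_simp.
Qed.

Lemma tmap_deltaL_assoc_tmr (Sig : bimod B A) (n : Sig) (y : tns ts D D) :
  tmap id lam (assoc_tmr n y) = tmapr (assoc_tmr n) (tmap id DeltaD y).
Proof. by move: y; on_pure_tensors => e f; rewrite /assoc_tmr; tensor_simp; rewrite deltaL_tm. Qed.

Lemma deltaL_coassoc (Sig : bimod B A) (x : tns ts D Sig) :
  tmap id lam (lam x) = lam (lam x).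
Proof.
move: x; on_pure_tensors => d n.
by rewrite deltaL_tm tmap_deltaL_assoc_tmr deltaL_assoc_tmr DeltaD_coassoc.
Qed.

Lemma deltaL_assocV (Sig : bimod B A) (C : bimod A A) (z : tns ts D (tns ts Sig C)) :
  tmap lam id (assocV z) = assocV (tmap id assocV (lam z)).
Proof.
move: z; on_pure_tensors3 => d n c; tensor_simp.
rewrite !deltaL_tm; move: (DeltaD d); on_pure_tensors => e f.
by rewrite /assoc_tmr; tensor_simp.
Qed.

Lemma rhoR_bimap (C : bimod A A) (Sig : bimod B A) (s : tns ts D Sig -> tns ts Sig C) :
  bimap s -> bimap (rhoR DeltaD s).
Proof. by move=> hs; rewrite /rhoR; solve_linear. Qed.
Hint Resolve rhoR_bimap : linear.

Lemma deltaL_rhoR (C : bimod A A) (Sig : bimod B A) (s : tns ts D Sig -> tns ts Sig C)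
  (x : tns ts D Sig) : bimap s ->
  tmap lam id (rhoR DeltaD s x) = assocV (tmap id (rhoR DeltaD s) (lam x)).
Proof.
move=> hs; rewrite {1}/rhoR deltaL_assocV deltaL_tmap; last by solve_linear.
by rewrite -deltaL_coassoc !tmap_compr //; solve_linear.
Qed.

Lemma counitL_tmap (M N : bimod B A) (g : M -> N) (y : tns ts D M) :
  lmap g -> counitL (tmap id g y) = g (counitL y).
Proof.
move=> hg; move: y; on_pure_tensors => e m; rewrite /counitL; tensor_simp.
by case: hg => _ ->.
Qed.

Lemma counitL_assocV (M Sig : bimod B A) (C : bimod A A) (g : M -> tns ts Sig C)
  (y : tns ts D M) : lmap g -> tmap counitL id (assocV (tmap id g y)) = g (counitL y).
Proof.
move=> hg; move: y; on_pure_tensors => e m; rewrite /counitL; tensor_simp.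
case: hg => _ ->; move: (g m); on_pure_tensors => n c.
by tensor_simp; rewrite tm_lact.
Qed.

Lemma counitL_deltaL (Sig : bimod B A) (x : tns ts D Sig) : counitL (lam x) = x.
Proof.
move: x; on_pure_tensors => d n; rewrite deltaL_tm.
rewrite -[in RHS](DeltaD_counitl d); move: (DeltaD d); on_pure_tensors => e f.
by rewrite /assoc_tmr /counitL; tensor_simp; rewrite tm_lact.
Qed.

Lemma deltaL_counitL (Sig : bimod B A) (x : tns ts D Sig) : tmap id counitL (lam x) = x.
Proof.
move: x; on_pure_tensors => d n; rewrite deltaL_tm.
rewrite -[in RHS](DeltaD_counitr d); move: (DeltaD d); on_pure_tensors => e f.
by rewrite /assoc_tmr /counitL; tensor_simp; rewrite tm_balanced.
Qed.

Lemma counitL_rhoR (C : bimod A A) (Sig : bimod B A) (s : tns ts D Sig -> tns ts Sig C)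
  (x : tns ts D Sig) : bimap s -> tmap counitL id (rhoR DeltaD s x) = s x.
Proof. by move=> hs; rewrite /rhoR counitL_assocV ?counitL_deltaL //; solve_linear. Qed.

Section TwoCells.
Variables (C : bimod A A) (Sig Sig' : bimod B A).
Variables (s : tns ts D Sig -> tns ts Sig C) (s' : tns ts D Sig' -> tns ts Sig' C).
Hypotheses (s_bimap : bimap s) (s'_bimap : bimap s').

Lemma cell_to_map_bicolinear a :
  two_cell DeltaD s s' a -> bicolinear DeltaD s s' (cell_to_map DeltaD a).
Proof.
rewrite /cell_to_map => -[a_bimap a_cell]; split; first by solve_linear.
- move=> x; rewrite -tmap_compr ?deltaL_coassoc -?deltaL_tmap //; solve_linear.
- move=> x; rewrite -tmap_compl ?deltaL_rhoR -?assocV_tmap ?tmap_compr; try solve_linear.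
  rewrite (eq_tmapr (g' := fun z => s' (tmap id a (lam z)))) ?/rhoR ?deltaL_tmap //;
    try solve_linear.
  by rewrite -deltaL_coassoc !tmap_compr //; solve_linear.
Qed.

Lemma map_to_cell_two_cell f :
  bicolinear DeltaD s s' f -> two_cell DeltaD s s' (map_to_cell epsD f).
Proof.
move=> [f_bimap f_left f_right]; split; first by rewrite /map_to_cell; solve_linear.
move=> x; rewrite -[map_to_cell _ _]/(fun z => counitL (f z)).
rewrite -(tmap_compl (f := counitL) (f' := f)); try solve_linear.
rewrite -(tmap_compr (g := counitL) (g' := f)); try solve_linear.
by rewrite [tmap f id _]f_right f_left counitL_rhoR // deltaL_counitL.
Qed.

Lemma map_to_cellK a : two_cell DeltaD s s' a -> map_to_cell epsD (cell_to_map DeltaD a) =1 a.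
Proof.
move=> [a_bimap _] x; rewrite -[map_to_cell _ _ _]/(counitL (tmap id a (lam x))).
by rewrite counitL_tmap ?counitL_deltaL //; solve_linear.
Qed.

Lemma cell_to_mapK f : bicolinear DeltaD s s' f -> cell_to_map DeltaD (map_to_cell epsD f) =1 f.
Proof.
move=> [f_bimap f_left _] x; rewrite -[cell_to_map _ _ _]/(tmap id (fun z => counitL (f z)) (lam x)).
by rewrite -tmap_compr ?f_left ?deltaL_counitL //; solve_linear.
Qed.
End TwoCells.
End LeftCoaction.
End Tensors.

Theorem proposition2p2 (k : comNzRingType) (ts : tensor_system k) (A B : algType k)
  (C : bimod A A) (DeltaC : C -> tns ts C C) (epsC : C -> reg A)
  (D : bimod B B) (DeltaD : D -> tns ts D D) (epsD : D -> reg B)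
  (Sig Sig' : bimod B A)
  (s : tns ts D Sig -> tns ts Sig C) (s' : tns ts D Sig' -> tns ts Sig' C) :
  is_coring DeltaC epsC -> is_coring DeltaD epsD ->
  is_pair DeltaC epsC DeltaD epsD s -> is_pair DeltaC epsC DeltaD epsD s' ->
  [/\ forall a, two_cell DeltaD s s' a ->
                bicolinear DeltaD s s' (cell_to_map DeltaD a),
      forall f, bicolinear DeltaD s s' f ->
                two_cell DeltaD s s' (map_to_cell epsD f),
      forall a, two_cell DeltaD s s' a ->
                map_to_cell epsD (cell_to_map DeltaD a) =1 a &
      forall f, bicolinear DeltaD s s' f ->
                cell_to_map DeltaD (map_to_cell epsD f) =1 f].
Proof.
move=> _ [DeltaD_bimap epsD_bimap DeltaD_coassoc DeltaD_counitl DeltaD_counitr].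
move=> [s_bimap _ _] [s'_bimap _ _]; split.
- exact: cell_to_map_bicolinear.
- exact: map_to_cell_two_cell.
- exact: map_to_cellK.
- exact: cell_to_mapK.
Qed.
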